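(* Let $p\in\mathcal{P}_\tau$ and $1\le i\le N$. Then $\mathcal{D}_ip=0$ if and only if $\mathcal{U}_ip=p+\kappa\,\omega_ip$.
   Context: $\tau$ is a partition of $N$ and $\tau$ also denotes an irreducible representation of the symmetric group $\mathcal{S}_N$ on a vector space $V_\tau$ (over $\mathbb{R}(\kappa)$, $\kappa$ a parameter). $\mathcal{P}_\tau=\mathcal{P}\otimes V_\tau$ is the space of $V_\tau$-valued polynomials in $x=(x_1,\dots,x_N)$, with $\mathcal{S}_N$-action $wp(x)=\tau(w)p(xw)$ where $(xw)_i=x_{w(i)}$; $(i,j)$ denotes a transposition and $x(i,j)$ the vector $x$ with $x_i,x_j$ interchanged. Dunkl operators: $\mathcal{D}_i(p(x)\otimes T)=\frac{\partial p}{\partial x_i}\otimes T+\kappa\sum_{j\ne i}\frac{p(x)-p(x(i,j))}{x_i-x_j}\otimes\tau((i,j))T$; Cherednik–Dunkl operators: $\mathcal{U}_i(p(x)\otimes T)=\mathcal{D}_i(x_ip(x)\otimes T)-\kappa\sum_{j=1}^{i-1}p(x(i,j))\otimes\tau((i,j))T$ (both extended linearly). The Jucys–Murphy elements are $\omega_i=\sum_{j=i+1}^N(i,j)$ for $1\le i<N$ and $\omega_N=0$, acting on $\mathcal{P}_\tau$ through the $\mathcal{S}_N$-action. *)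

From HB Require Import structures.
From mathcomp Require Import all_boot all_order all_algebra all_fingroup all_character.
From mathcomp Require Import fraction.
From mathcomp Require Import mpoly.
From mathcomp Require Import reals.
From Stdlib Require Import ClassicalEpsilon.
Set Implicit Arguments. Unset Strict Implicit. Unset Printing Implicit Defensive.
Import Order.TTheory GRing.Theory Num.Theory.
Local Open Scope ring_scope.

Definition Rk (R : realType) := {fraction {poly R}}.
Definition kappa (R : realType) : Rk R := tofrac ('X : {poly R}).

Section Dunkl.
Variables (F : fieldType) (N n : nat).
Variable rG : mx_representation F [set: 'S_N] n.
Variable k : F.

(* P_tau = P (x) V_tau, with V_tau = 'rV[F]_n : a V_tau-valued polynomial is
   the row of its n coordinate polynomials. *)
Definition Ptau := 'rV[{mpoly F[N]}]_n.

(* tau(w) as a left action on V_tau = 'rV_n (mx_representation acts on the right) *)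
Definition tau (w : 'S_N) : 'M[F]_n := rG (w^-1)%g.

Definition actV (A : 'M[F]_n) (P : Ptau) : Ptau :=
  P *m map_mx (fun c : F => c%:MP) A.

(* p(xw) with (xw)_i = x_{w(i)} : msym w replaces 'X_i by 'X_(w i) *)
Definition subst (w : 'S_N) (P : Ptau) : Ptau := map_mx (msym w) P.

Definition Sact (w : 'S_N) (P : Ptau) : Ptau := actV (tau w) (subst w P).

(* the divided difference (q(x) - q(x(i,j))) / (x_i - x_j), i.e. the unique
   polynomial r with (x_i - x_j) r = q(x) - q(x(i,j)) *)
Definition divdiff (i j : 'I_N) (q : {mpoly F[N]}) : {mpoly F[N]} :=
  epsilon (inhabits 0)
    (fun r => ('X_i - 'X_j) * r = q - msym (tperm i j) q).

Definition Dunkl (i : 'I_N) (P : Ptau) : Ptau :=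
  map_mx (mderiv i) P
  + k%:MP *: \sum_(j < N | j != i) actV (tau (tperm i j)) (map_mx (divdiff i j) P).

Definition CDunkl (i : 'I_N) (P : Ptau) : Ptau :=
  Dunkl i ('X_i *: P)
  - k%:MP *: \sum_(j < N | (j < i)%N) actV (tau (tperm i j)) (subst (tperm i j) P).

(* Jucys-Murphy element omega_i = sum_{j > i} (i,j), acting through Sact
   (omega_N = 0 is the empty sum) *)
Definition omega (i : 'I_N) (P : Ptau) : Ptau :=
  \sum_(j < N | (i < j)%N) Sact (tperm i j) P.

End Dunkl.

From HB Require Import structures.
From mathcomp Require Import all_boot all_order all_algebra all_fingroup all_character.
From mathcomp Require Import fraction mpoly reals ring.
From Stdlib Require Import ClassicalEpsilon.
Import GRing.Theory.
Local Open Scope ring_scope.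
Set Implicit Arguments. Unset Strict Implicit.

(* Since the divided difference obeys the twisted Leibniz rule
   (x_i q - (x_i q)(x(i,j))) / (x_i - x_j) = x_i (q - q(x(i,j))) / (x_i - x_j) + q(x(i,j)),
   one gets the commutation relation D_i x_i = 1 + x_i D_i + kappa sum_{j <> i} (i,j).
   In U_i the correction term removes the transpositions with j < i, and those with
   j > i form omega_i, so U_i p = p + x_i D_i p + kappa omega_i p.  As multiplication
   by x_i is injective on V_tau-valued polynomials, U_i p = p + kappa omega_i p holds
   exactly when D_i p = 0. *)

Section PolynomialFacts.
Variables (R : comNzRingType) (N : nat).
Implicit Types (q : {mpoly R[N]}).

Lemma msymXU (s : 'S_N) (i : 'I_N) : msym s 'X_i = 'X_(s i) :> {mpoly R[N]}.
Proof.
rewrite msymX; congr (mpolyX _ _); apply/mnmP=> l; rewrite !mnmE.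
by rewrite -(inj_eq (@perm_inj _ s)) permKV.
Qed.

Lemma mpolyXU_neq0 (i : 'I_N) : ('X_i : {mpoly R[N]}) != 0.
Proof.
apply/eqP=> /(congr1 (mcoeff U_(i))).
by rewrite mcoeffXU eqxx mcoeff0 => /eqP; rewrite oner_eq0.
Qed.

Lemma subr_mpolyXU_neq0 (i j : 'I_N) : i != j -> ('X_i - 'X_j : {mpoly R[N]}) != 0.
Proof.
move=> neq_ij; rewrite subr_eq0; apply/eqP=> /(congr1 (mcoeff U_(i))).
by rewrite !mcoeffXU eqxx eq_sym (negbTE neq_ij) => /eqP; rewrite oner_eq0.
Qed.

Lemma mderiv_mulXU (i : 'I_N) q : mderiv i ('X_i * q) = q + 'X_i * mderiv i q.
Proof.
rewrite mderivM mderivX mnm1E eqxx.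
have -> : (U_(i) - U_(i) = 0 :> 'X_{1..N})%MM by apply/mnmP=> l; rewrite !mnmE subnn.
by rewrite mpolyX0 scale1r mul1r.
Qed.

Definition has_divdiff (i j : 'I_N) q :=
  exists r, ('X_i - 'X_j) * r = q - msym (tperm i j) q.

Section HasDivdiff.
Variables i j : 'I_N.

Lemma has_divdiff1 : has_divdiff i j 1.
Proof. by exists 0; rewrite msym1 subrr mulr0. Qed.

Lemma has_divdiffX (l : 'I_N) : has_divdiff i j 'X_l.
Proof.
rewrite /has_divdiff msymXU.
have [->|neq_li] := eqVneq l i; first by exists 1; rewrite tpermL mulr1.
have [->|neq_lj] := eqVneq l j; first by exists (-1); rewrite tpermR mulrN1 opprB.
by exists 0; rewrite tpermD 1?eq_sym // subrr mulr0.
Qed.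

Lemma has_divdiffD q1 q2 :
  has_divdiff i j q1 -> has_divdiff i j q2 -> has_divdiff i j (q1 + q2).
Proof. by move=> [r1 h1] [r2 h2]; exists (r1 + r2); rewrite mulrDr h1 h2 msymD; ring. Qed.

Lemma has_divdiffM q1 q2 :
  has_divdiff i j q1 -> has_divdiff i j q2 -> has_divdiff i j (q1 * q2).
Proof.
move=> [r1 h1] [r2 h2]; exists (r1 * q2 + msym (tperm i j) q1 * r2).
by rewrite mulrDr mulrA h1 mulrCA h2 msymM; ring.
Qed.

Lemma has_divdiffZ c q : has_divdiff i j q -> has_divdiff i j (c *: q).
Proof. by move=> [r h]; exists (c *: r); rewrite -scalerAr h msymZ scalerBr. Qed.

Lemma mpoly_has_divdiff q : has_divdiff i j q.
Proof.
rewrite (mpolyE q); elim/big_ind: _ => [||m _].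
- by exists 0; rewrite msym0 subrr mulr0.
- exact: has_divdiffD.
apply: has_divdiffZ; rewrite mpolyXE_id; elim/big_ind: _ => [||l _].
- exact: has_divdiff1.
- exact: has_divdiffM.
elim: (m l) => [|e IHe]; first exact: has_divdiff1.
by rewrite exprS; apply: has_divdiffM IHe; apply: has_divdiffX.
Qed.

End HasDivdiff.
End PolynomialFacts.

Section DividedDifference.
Variables (F : fieldType) (N : nat) (i j : 'I_N).
Implicit Types (q : {mpoly F[N]}).

Lemma mulXB_divdiff q : ('X_i - 'X_j) * divdiff i j q = q - msym (tperm i j) q.
Proof.
have [r def_r] := mpoly_has_divdiff i j q.
by apply: (epsilon_spec _ (fun r0 => _ * r0 = _)); exists r.
Qed.

Lemma divdiff_mulXU q : i != j ->
  divdiff i j ('X_i * q) = 'X_i * divdiff i j q + msym (tperm i j) q.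
Proof.
move=> neq_ij; apply: (mulfI (subr_mpolyXU_neq0 _ neq_ij)).
by rewrite mulXB_divdiff mulrDr mulrCA mulXB_divdiff msymM msymXU tpermL; ring.
Qed.

End DividedDifference.

Lemma sum_ord_neq_split (V : nmodType) (N : nat) (i : 'I_N) (G : 'I_N -> V) :
  \sum_(j < N | j != i) G j = \sum_(j < N | (j < i)%N) G j + \sum_(j < N | (i < j)%N) G j.
Proof.
rewrite (bigID (fun j : 'I_N => (j < i)%N)) /=.
congr (_ + _); apply: eq_bigl => j; rewrite -(inj_eq val_inj) /=; by case: ltngtP.
Qed.

Section CherednikDunkl.
Variables (F : fieldType) (N n : nat).
Variable rG : mx_representation F [set: 'S_N] n.
Variable k : F.
Implicit Types (P : Ptau F N n).

Lemma actVD A P1 P2 : actV A (P1 + P2) = actV A P1 + actV A P2.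
Proof. by rewrite /actV mulmxDl. Qed.

Lemma actVZ A c P : actV A (c *: P) = c *: actV A P.
Proof. by rewrite /actV scalemxAl. Qed.

Lemma map_mderiv_scaleXU i P :
  map_mx (mderiv i) ('X_i *: P) = P + 'X_i *: map_mx (mderiv i) P.
Proof. by apply/matrixP=> a b; rewrite !mxE mderiv_mulXU. Qed.

Lemma map_divdiff_scaleXU i j P : i != j ->
  map_mx (divdiff i j) ('X_i *: P) = 'X_i *: map_mx (divdiff i j) P + subst (tperm i j) P.
Proof. by move=> neq_ij; apply/matrixP=> a b; rewrite !mxE divdiff_mulXU. Qed.

Lemma sum_actV_divdiff_scaleXU i P :
  \sum_(j < N | j != i) actV (tau rG (tperm i j)) (map_mx (divdiff i j) ('X_i *: P))
  = 'X_i *: \sum_(j < N | j != i) actV (tau rG (tperm i j)) (map_mx (divdiff i j) P)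
    + \sum_(j < N | j != i) Sact rG (tperm i j) P.
Proof.
rewrite scaler_sumr -big_split; apply: eq_bigr => j neq_ji.
by rewrite map_divdiff_scaleXU 1?eq_sym // actVD actVZ.
Qed.

Lemma Dunkl_scaleXU i P :
  Dunkl rG k i ('X_i *: P) = P + 'X_i *: Dunkl rG k i P
    + k%:MP *: \sum_(j < N | j != i) Sact rG (tperm i j) P.
Proof.
rewrite [LHS]/Dunkl map_mderiv_scaleXU sum_actV_divdiff_scaleXU /Dunkl.
by rewrite !scalerDr scalerA [k%:MP * _]mulrC -scalerA !addrA.
Qed.

Lemma CDunklE i P : CDunkl rG k i P = P + 'X_i *: Dunkl rG k i P + k%:MP *: omega rG i P.
Proof.
rewrite /CDunkl Dunkl_scaleXU sum_ord_neq_split [k%:MP *: (_ + _)]scalerDr.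
set lower := k%:MP *: \sum_(j < N | (j < i)%N) _.
by rewrite [lower + _]addrC addrA addrK.
Qed.

Lemma Dunkl_eq0_CDunkl i P :
  Dunkl rG k i P = 0 <-> CDunkl rG k i P = P + k%:MP *: omega rG i P.
Proof.
rewrite CDunklE; split=> [->|]; first by rewrite scaler0 addr0.
rewrite -addrA [_ *: Dunkl _ _ _ _ + _]addrC addrA -[RHS]addr0 => /addrI /eqP.
by rewrite scalemx_eq0 (negbTE (mpolyXU_neq0 _ _)) => /eqP.
Qed.

End CherednikDunkl.

Theorem proposition6p1 (R : realType) (N n : nat)
    (rG : mx_representation (Rk R) [set: 'S_N] n) (irr : mx_irreducible rG)
    (p : Ptau (Rk R) N n) (i : 'I_N) :
  Dunkl rG (kappa R) i p = 0 <->
  CDunkl rG (kappa R) i p = p + (kappa R)%:MP *: omega rG i p.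
Proof. exact: Dunkl_eq0_CDunkl. Qed.
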